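(* Let $\lambda,\mu\in DP$ with $D_\mu\subseteq D_\lambda$, let $k>1$, and let $T$ be a tableau of shape $D_{\lambda/\mu}$ such that either $c(T)_k=c(T)_{k-1}=0$ or all of the following hold: (1) there is a box $(x,y)$ with $T(x,y)=k-1$ and $T(z,y)\ne k$ for all $z>x$; (2) if $T(x,y)=k$ then there is $z<x$ with $T(z,y)=k-1$; (3) if $T(x,y)=k'$ then $T(x-1,y-1)=(k-1)'$; (4) $T^{(k-1)}$ is fitting; (5) if $c(T)_k>0$ then $T^{(k)}$ is fitting. Then $T$ is $k$-amenable.
   Context: $DP$: partitions with distinct parts (including $\emptyset$). Shifted diagram $D_\lambda=\{(i,j):1\le i\le\ell(\lambda),\ i\le j\le i+\lambda_i-1\}$ (row $i$, column $j$); $D_{\lambda/\mu}=D_\lambda\setminus D_\mu$. Alphabet $\mathcal A=\{1'<1<2'<2<\cdots\}$, $|x|$ unmarked version of a letter. A tableau of shape $D$ is $T:D\to\mathcal A$, weakly increasing along rows and down columns, each unmarked $k$ at most once per column, each marked $k'$ at most once per row; $c(T)_i$ = number of entries $i$ or $i'$. Reading word $w=w_1\cdots w_n$: rows read left to right, from bottom row to top row. $m_i(0)=0$; for $1\le j\le n$, $m_i(j)$ = number of letters $i$ in $w_{n-j+1}\cdots w_n$; for $n<j\le2n$, $m_i(j)=m_i(n)+$ number of letters $i'$ in $w_1\cdots w_{j-n}$. $w$ is $k$-amenable if (a) for $0\le j\le n-1$, $m_k(j)=m_{k-1}(j)$ implies $w_{n-j}\notin\{k,k'\}$; (b) for $n\le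 j\le2n-1$, $m_k(j)=m_{k-1}(j)$ implies $w_{j-n+1}\notin\{k-1,k'\}$; (c) if $j$ is smallest with $w_j\in\{k',k\}$ then $w_j=k$; (d) if $j$ is smallest with $w_j\in\{(k-1)',k-1\}$ then $w_j=k-1$. $T$ is $k$-amenable if $w(T)$ is. $T^{(i)}=\{(x,y):|T(x,y)|=i\}$; its components are border strips; the last box of a border strip $B$ is the $(u,v)\in B$ with $(u+1,v),(u,v-1)\notin B$, and the last box of $T^{(i)}$ is that of its leftmost component; $T^{(i)}$ is fitting if its last box contains $i$. *)

From mathcomp Require Import all_boot.
Set Implicit Arguments. Unset Strict Implicit. Unset Printing Implicit Defensive.

(* Letters of the alphabet A = {1' < 1 < 2' < 2 < ...}:
   a letter is a pair (n, marked); (n, true) is n', (n, false) is n. *)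
Definition letter := (nat * bool)%type.
Definition unm (n : nat) : letter := (n, false).
Definition mrk (n : nat) : letter := (n, true).
Definition absl (l : letter) : nat := l.1.
(* order key: n' |-> 2n, n |-> 2n+1, so that n' < n < (n+1)' *)
Definition lcode (l : letter) : nat := l.1.*2 + ~~ l.2.

Definition is_DP (la : seq nat) : bool :=
  sorted (fun a b => b < a) la && all (fun x => 0 < x) la.

(* lambda_i (1-indexed) *)
Definition part (la : seq nat) (i : nat) : nat := nth 0 la i.-1.

(* (i,j) in the shifted diagram D_lambda *)
Definition inD (la : seq nat) (i j : nat) : bool :=
  (1 <= i <= size la) && (i <= j <= i + part la i - 1).

Definition inSkew (la mu : seq nat) (i j : nat) : bool :=
  inD la i j && ~~ inD mu i j.

Definition boxpred (la mu : seq nat) : pred (nat * nat) :=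
  fun b => inSkew la mu b.1 b.2.

(* tableau of shape D_{lambda/mu}; T is only relevant on the boxes *)
Definition is_tableau (la mu : seq nat) (T : nat -> nat -> letter) : Prop :=
  (forall i j, inSkew la mu i j -> 0 < absl (T i j)) /\
  (forall i j j', inSkew la mu i j -> inSkew la mu i j' -> j <= j' ->
     lcode (T i j) <= lcode (T i j')) /\
  (forall i i' j, inSkew la mu i j -> inSkew la mu i' j -> i <= i' ->
     lcode (T i j) <= lcode (T i' j)) /\
  (forall i i' j, inSkew la mu i j -> inSkew la mu i' j -> i <> i' ->
     T i j = T i' j -> (T i j).2 = true) /\
  (forall i j j', inSkew la mu i j -> inSkew la mu i j' -> j <> j' ->
     T i j = T i j' -> (T i j).2 = false).

Definition rowboxes (la mu : seq nat) (i : nat) : seq (nat * nat) :=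
  [seq (i, j) | j <- iota i (part la i) & ~~ inD mu i j].

Definition boxes (la mu : seq nat) : seq (nat * nat) :=
  flatten [seq rowboxes la mu i | i <- rev (iota 1 (size la))].

Definition readword (la mu : seq nat) (T : nat -> nat -> letter) : seq letter :=
  [seq T b.1 b.2 | b <- boxes la mu].

Definition content (la mu : seq nat) (T : nat -> nat -> letter) (i : nat) : nat :=
  count (fun l => absl l == i) (readword la mu T).

Definition mcount (w : seq letter) (i j : nat) : nat :=
  if j <= size w then count (pred1 (unm i)) (drop (size w - j) w)
  else count (pred1 (unm i)) w + count (pred1 (mrk i)) (take (j - size w) w).

(* w_j, 1-indexed *)
Definition wlet (w : seq letter) (j : nat) : letter := nth (unm 0) w j.-1.

Definition amenable (w : seq letter) (k : nat) : Prop :=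
  let n := size w in
  (forall j, j < n -> mcount w k j = mcount w k.-1 j ->
     wlet w (n - j) \notin [:: mrk k; unm k]) /\
  (forall j, n <= j < 2 * n -> mcount w k j = mcount w k.-1 j ->
     wlet w (j - n + 1) \notin [:: unm k.-1; mrk k]) /\
  (forall j, 1 <= j <= n -> absl (wlet w j) = k ->
     (forall i, 1 <= i < j -> absl (wlet w i) <> k) -> wlet w j = unm k) /\
  (forall j, 1 <= j <= n -> absl (wlet w j) = k.-1 ->
     (forall i, 1 <= i < j -> absl (wlet w i) <> k.-1) -> wlet w j = unm k.-1).

Definition tab_amenable (la mu : seq nat) (T : nat -> nat -> letter) (k : nat) : Prop :=
  amenable (readword la mu T) k.

Definition Tset (la mu : seq nat) (T : nat -> nat -> letter) (i : nat) : pred (nat * nat) :=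
  fun b => boxpred la mu b && (absl (T b.1 b.2) == i).

Definition adj : rel (nat * nat) := fun a b =>
  ((a.1 == b.1) && ((a.2.+1 == b.2) || (b.2.+1 == a.2))) ||
  ((a.2 == b.2) && ((a.1.+1 == b.1) || (b.1.+1 == a.1))).

Definition conn (S : pred (nat * nat)) (a b : nat * nat) : Prop :=
  S a /\ exists p : seq (nat * nat), [&& path adj a p, all S p & last a p == b].

Definition in_leftmost (S : pred (nat * nat)) (b : nat * nat) : Prop :=
  exists a, S a /\ (forall c, S c -> a.2 <= c.2) /\ conn S a b.

Definition last_box (S : pred (nat * nat)) (b : nat * nat) : Prop :=
  S b /\ ~~ S (b.1 + 1, b.2) /\ ~~ S (b.1, b.2 - 1).

Definition fitting (la mu : seq nat) (T : nat -> nat -> letter) (i : nat) : Prop :=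
  forall b, in_leftmost (Tset la mu T i) b -> last_box (Tset la mu T i) b ->
    T b.1 b.2 = unm i.

From mathcomp Require Import all_boot zify.
Set Implicit Arguments. Unset Strict Implicit. Unset Printing Implicit Defensive.

(* Amenability compares the counts of k and k-1 along the reading word, first
   backwards through the unmarked letters and then forwards through the marked
   ones.  Backwards: every unmarked k read after a box holding k or k' has an
   unmarked k-1 above it in its column (condition (2)), and so does that box
   itself (climb its column using (3)); unmarked letters of one value sit in
   distinct columns, so k-1 strictly wins.  Forwards: condition (1) provides a
   column with a k-1 but no k below it, and the diagonal shift of (3) injects
   the k' read before a box into the (k-1)'.  Finally, the first letter of
   absolute value i in reading order is the last box of the leftmost component
   of T^(i), hence unmarked when T^(i) is fitting. *)

Section PairwiseSplit.

Variables (X : eqType) (r : rel X) (x0 : X) (s : seq X) (p : nat).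
Hypotheses (r_irr : irreflexive r) (r_trans : transitive r).
Hypotheses (s_pw : pairwise r s) (lt_p_s : p < size s).

Let s_split : s = take p s ++ nth x0 s p :: drop p.+1 s.
Proof. by rewrite -drop_nth // cat_take_drop. Qed.

Lemma pairwise_take_before c : c \in take p s -> r c (nth x0 s p).
Proof.
move: s_pw; rewrite {1}s_split pairwise_cat => /and3P[/allrelP before _ _] ct.
by apply: before; rewrite // inE eqxx.
Qed.

Lemma pairwise_drop_after c : c \in drop p.+1 s -> r (nth x0 s p) c.
Proof.
move: s_pw; rewrite {1}s_split pairwise_cat => /and3P[_ _].
by rewrite [pairwise _ _]/= => /andP[/allP after _]; apply: after.
Qed.

Lemma count_take_pairwise (P : pred X) :
  count P (take p s) = count (fun c => P c && r c (nth x0 s p)) s.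
Proof.
rewrite {3}s_split count_cat /= r_irr andbF add0n.
rewrite (@eq_in_count _ _ pred0 (drop p.+1 s)) ?count_pred0 ?addn0; last first.
  move=> c /pairwise_drop_after after; apply/negbTE/nandP; right.
  by apply: contraT => /negPn /(r_trans after); rewrite r_irr.
by apply: eq_in_count => c /pairwise_take_before ->; rewrite andbT.
Qed.

Lemma count_drop_pairwise (P : pred X) :
  count P (drop p.+1 s) = count (fun c => P c && r (nth x0 s p) c) s.
Proof.
rewrite {3}s_split count_cat /= r_irr andbF add0n.
rewrite (@eq_in_count _ _ pred0 (take p s)) ?count_pred0 ?add0n; last first.
  move=> c /pairwise_take_before before; apply/negbTE/nandP; right.
  by apply: contraT => /negPn /(r_trans before); rewrite r_irr.
by apply: eq_in_count => c /pairwise_drop_after ->; rewrite andbT.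
Qed.

Lemma mem_take_pairwise c : c \in s -> r c (nth x0 s p) -> c \in take p s.
Proof.
rewrite {1}s_split mem_cat inE => /or3P[//|/eqP->|/pairwise_drop_after after].
  by rewrite r_irr.
by move=> /(r_trans after); rewrite r_irr.
Qed.

End PairwiseSplit.

Lemma leq_count_inj (X Y : eqType) (s : seq X) (PB PA : pred X) (g h : X -> Y)
    (extra : seq Y) :
  uniq s -> uniq extra -> {in [seq c <- s | PB c] &, injective g} ->
  (forall y, y \in extra -> y \notin [seq g c | c <- s & PB c]) ->
  {subset extra ++ [seq g c | c <- s & PB c] <= [seq h c | c <- s & PA c]} ->
  size extra + count PB s <= count PA s.
Proof.
move=> s_uniq extra_uniq g_inj extra_out sub.
have U : uniq (extra ++ [seq g c | c <- s & PB c]).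
  rewrite cat_uniq extra_uniq (map_inj_in_uniq g_inj) filter_uniq // andbT.
  by apply/hasPn=> y img_y; apply: contraL img_y => /extra_out.
by have := uniq_leq_size U sub; rewrite size_cat !size_map !size_filter.
Qed.

Lemma lcode_mrk i : lcode (mrk i) = i.*2.
Proof. by rewrite /lcode addn0. Qed.

Lemma lcode_unm i : lcode (unm i) = i.*2.+1.
Proof. by rewrite /lcode addn1. Qed.

Lemma lcode_eq_mrk l i : lcode l = i.*2 -> l = mrk i.
Proof. by case: l => n [|]; rewrite /lcode /mrk /= => ?; congr (_, _); lia. Qed.

Lemma lcode_eq_unm l i : lcode l = i.*2.+1 -> l = unm i.
Proof. by case: l => n [|]; rewrite /lcode /unm /= => ?; congr (_, _); lia. Qed.

Lemma absl_lcode l i : (absl l == i) = (i.*2 <= lcode l <= i.*2.+1).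
Proof. by case: l => n [|]; rewrite /absl /lcode /=; lia. Qed.

Lemma amenable_of_counts (w : seq letter) (k : nat) :
  (forall p, p < size w -> nth (unm 0) w p \in [:: mrk k; unm k] ->
     count (pred1 (unm k)) (drop p.+1 w) != count (pred1 (unm k.-1)) (drop p.+1 w)) ->
  (forall p, p < size w -> nth (unm 0) w p \in [:: unm k.-1; mrk k] ->
     count (pred1 (unm k)) w + count (pred1 (mrk k)) (take p w) !=
     count (pred1 (unm k.-1)) w + count (pred1 (mrk k.-1)) (take p w)) ->
  (forall i, i \in [:: k; k.-1] -> forall p, p < size w ->
     absl (nth (unm 0) w p) = i -> (forall q, q < p -> absl (nth (unm 0) w q) <> i) ->
     nth (unm 0) w p = unm i) ->
  amenable w k.
Proof.
move=> cond_a cond_b first_unm; rewrite /amenable /wlet.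
have first_unm_at i : i \in [:: k; k.-1] -> forall j, 1 <= j <= size w ->
    absl (nth (unm 0) w j.-1) = i ->
    (forall j', 1 <= j' < j -> absl (nth (unm 0) w j'.-1) <> i) ->
    nth (unm 0) w j.-1 = unm i.
  move=> ki j j_range abs_j before; apply: first_unm abs_j _ => //; first by lia.
  by move=> q q_lt; apply: (before q.+1); lia.
split; [|split; [|split]].
- move=> j lt_j; rewrite /mcount (ltnW lt_j); set p := (size w - j).-1.
  have -> : size w - j = p.+1 by lia.
  move=> eq_cnt; apply/negP => /(cond_a p ltac:(lia)).
  by rewrite eq_cnt eqxx.
- move=> j /andP[n_le_j j_lt]; set p := j - size w.
  have mcountE i : mcount w i j = count (pred1 (unm i)) w + count (pred1 (mrk i)) (take p w).
    rewrite /mcount; case: leqP => [j_le|//].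
    have -> : p = 0 by lia.
    have -> : size w - j = 0 by lia.
    by rewrite drop0 take0 addn0.
  rewrite !mcountE (_ : (j - size w + 1).-1 = p); last by lia.
  by move=> eq_cnt; apply/negP => /(cond_b p ltac:(lia)); rewrite eq_cnt eqxx.
- by apply: first_unm_at; rewrite inE eqxx.
- by apply: first_unm_at; rewrite !inE eqxx orbT.
Qed.

Lemma amenable_absent (w : seq letter) (k : nat) :
  count (fun l => absl l == k) w = 0 -> count (fun l => absl l == k.-1) w = 0 ->
  amenable w k.
Proof.
have absent i : count (fun l => absl l == i) w = 0 ->
    forall p, p < size w -> absl (nth (unm 0) w p) != i.
  move/eqP; rewrite -leqn0 leqNgt -has_count => /hasPn not_i p lt_p.
  exact/not_i/mem_nth.
move=> /absent no_k /absent no_k1; apply: amenable_of_counts => [p lt_p|p lt_p|i].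
- by rewrite !inE => /orP[] /eqP wp; move: (no_k p lt_p); rewrite wp /= eqxx.
- rewrite !inE => /orP[] /eqP wp; first by move: (no_k1 p lt_p); rewrite wp /= eqxx.
  by move: (no_k p lt_p); rewrite wp /= eqxx.
rewrite !inE => /orP[] /eqP -> p lt_p abs_p.
  by move: (no_k p lt_p); rewrite abs_p eqxx.
by move: (no_k1 p lt_p); rewrite abs_p eqxx.
Qed.

Definition reads_before (c d : nat * nat) : bool :=
  (d.1 < c.1) || ((c.1 == d.1) && (c.2 < d.2)).

Lemma reads_before_trans : transitive reads_before.
Proof.
move=> [b1 b2] [a1 a2] [c1 c2]; rewrite /reads_before /=.
by case/orP=> [?|/andP[/eqP ? ?]]; case/orP=> [?|/andP[/eqP ? ?]]; apply/orP; lia.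
Qed.

Lemma reads_before_irr : irreflexive reads_before.
Proof. move=> [a b]; rewrite /reads_before /=; lia. Qed.

Lemma pairwise_rowboxes la mu i : pairwise reads_before (rowboxes la mu i).
Proof.
rewrite /rowboxes pairwise_map.
apply: (@sub_pairwise _ ltn) => [a b /= ltab|]; first by rewrite /reads_before /= eqxx ltab orbT.
rewrite -sorted_pairwise; last exact: ltn_trans.
exact/sorted_filter/iota_ltn_sorted/ltn_trans.
Qed.

Lemma pairwise_boxes la mu : pairwise reads_before (boxes la mu).
Proof.
rewrite /boxes; elim: (size la) => [//|n IH].
rewrite -[n.+1]addn1 iotaD rev_cat /= pairwise_cat IH pairwise_rowboxes !andbT add1n.
apply/allrelP=> c d /mapP[j _ ->] /flatten_mapP[i + /mapP[j' _ ->]].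
by rewrite mem_rev mem_iota /reads_before /=; lia.
Qed.

Lemma uniq_boxes la mu : uniq (boxes la mu).
Proof. exact: pairwise_uniq reads_before_irr (pairwise_boxes la mu). Qed.

Lemma mem_boxes la mu c : (c \in boxes la mu) = inSkew la mu c.1 c.2.
Proof.
case: c => i j /=; rewrite /inSkew /inD; apply/flatten_mapP/idP.
  case=> i'; rewrite mem_rev mem_iota => ii' /mapP[j' + [-> ->]].
  by rewrite mem_filter mem_iota => /andP[-> jj']; rewrite andbT; lia.
case/andP=> /andP[ii jj] mu_ij; exists i; first by rewrite mem_rev mem_iota; lia.
by apply/mapP; exists j => //; rewrite mem_filter mem_iota mu_ij; lia.
Qed.

Lemma size_readword la mu T : size (readword la mu T) = size (boxes la mu).
Proof. exact: size_map. Qed.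

Lemma nth_readword la mu T p : p < size (boxes la mu) ->
  nth (unm 0) (readword la mu T) p =
  T (nth (0, 0) (boxes la mu) p).1 (nth (0, 0) (boxes la mu) p).2.
Proof. exact: nth_map. Qed.

Lemma count_drop_readword la mu T (P : pred letter) p : p < size (boxes la mu) ->
  count P (drop p.+1 (readword la mu T)) =
  count (fun c => P (T c.1 c.2) && reads_before (nth (0, 0) (boxes la mu) p) c)
    (boxes la mu).
Proof.
move=> lt_p; rewrite -map_drop count_map.
exact: count_drop_pairwise reads_before_irr reads_before_trans (pairwise_boxes la mu) lt_p _.
Qed.

Lemma count_take_readword la mu T (P : pred letter) p : p < size (boxes la mu) ->
  count P (take p (readword la mu T)) =
  count (fun c => P (T c.1 c.2) && reads_before c (nth (0, 0) (boxes la mu) p))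
    (boxes la mu).
Proof.
move=> lt_p; rewrite -map_take count_map.
exact: count_take_pairwise reads_before_irr reads_before_trans (pairwise_boxes la mu) lt_p _.
Qed.

Lemma nth_DP_gap la i d : is_DP la -> i + d < size la ->
  nth 0 la (i + d) + d <= nth 0 la i.
Proof.
case/andP=> la_sorted _; elim: d => [|d IH] lt_id; first by rewrite !addn0.
have : nth 0 la (i + d.+1) < nth 0 la (i + d).
  have gtn_trans : transitive (fun a b : nat => b < a).
    by move=> a b c ab ca; apply: ltn_trans ab.
  by apply: (sorted_ltn_nth gtn_trans 0 la_sorted); rewrite ?inE /=; lia.
have := IH ltac:(lia); lia.
Qed.

Lemma part_DP_gap la x' x : is_DP la -> 1 <= x' <= x -> x <= size la ->
  part la x + (x - x') <= part la x'.
Proof.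
move=> la_DP x'x x_la; rewrite /part.
have -> : x.-1 = x'.-1 + (x - x') by lia.
apply: nth_DP_gap la_DP _; lia.
Qed.

Section SkewShape.

Variables (la mu : seq nat).
Hypothesis la_DP : is_DP la.

Lemma inSkew_diag_up x y :
  inSkew la mu (x - 1) (y - 1) -> inSkew la mu x y -> inSkew la mu (x - 1) y.
Proof.
rewrite /inSkew /inD => /andP[diag_la diag_mu] /andP[xy_la _].
have := @part_DP_gap la (x - 1) x la_DP ltac:(lia) ltac:(lia).
move: diag_mu; case: (1 <= x - 1 <= size mu) => /= [mu_diag|]; last lia.
move=> gap; apply/andP; split; lia.
Qed.

Lemma inSkew_row_between x' y' x y j :
  inSkew la mu x' y' -> inSkew la mu x y -> x' < x -> y' <= j <= y ->
  inSkew la mu x' j.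
Proof.
rewrite /inSkew /inD => /andP[x'y'_la x'y'_mu] /andP[xy_la _] x'x jj.
have := @part_DP_gap la x' x la_DP ltac:(lia) ltac:(lia).
move=> gap; apply/andP; split; first lia.
by move: x'y'_mu; apply: contra => /andP[-> ?]; lia.
Qed.

Hypothesis mu_DP : is_DP mu.

Lemma inSkew_col_between x' x y z :
  inSkew la mu x' y -> inSkew la mu x y -> x' <= z <= x -> inSkew la mu z y.
Proof.
rewrite /inSkew /inD => /andP[x'y_la x'y_mu] /andP[xy_la _] zz.
have := @part_DP_gap la z x la_DP ltac:(lia) ltac:(lia).
move=> gap_la; apply/andP; split; first lia.
apply: contra x'y_mu => /andP[z_mu zy_mu].
have := @part_DP_gap mu x' z mu_DP ltac:(lia) ltac:(lia); lia.
Qed.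

End SkewShape.

Section TableauFacts.

Variables (la mu : seq nat) (T : nat -> nat -> letter).
Hypotheses (la_DP : is_DP la) (mu_DP : is_DP mu) (T_tab : is_tableau la mu T).

Lemma no_absl_triangle i z w :
  inSkew la mu z w -> inSkew la mu z w.+1 -> inSkew la mu z.+1 w.+1 ->
  absl (T z w) = i -> absl (T z w.+1) = i -> absl (T z.+1 w.+1) = i -> False.
Proof.
(* The corner T z w.+1 can be neither i' (repeated in its row) nor i (repeated
   in its column). *)
case: T_tab => _ [row [col [colU rowM]]] zw zw1 z1w1 /eqP + /eqP + /eqP.
rewrite !absl_lcode => c1 c2 c3.
have := row _ _ _ zw zw1 (leqnSn w); have := col _ _ _ zw1 z1w1 (leqnSn z).
have [/lcode_eq_mrk m2|/lcode_eq_unm u2] : lcode (T z w.+1) = i.*2 \/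
    lcode (T z w.+1) = i.*2.+1 by lia.
- rewrite m2 lcode_mrk => _ r; have /lcode_eq_mrk m1 : lcode (T z w) = i.*2 by lia.
  by have := rowM _ _ _ zw zw1 (@n_Sn w); rewrite m1 m2 => /(_ erefl).
- rewrite u2 lcode_unm => c _; have /lcode_eq_unm u3 : lcode (T z.+1 w.+1) = i.*2.+1 by lia.
  by have := colU _ _ _ zw1 z1w1 (@n_Sn z); rewrite u2 u3 => /(_ erefl).
Qed.

Section FirstBox.

Variables (i x y : nat).
Hypotheses (xy_skew : inSkew la mu x y) (xy_i : absl (T x y) = i).
Hypothesis xy_first : forall c, inSkew la mu c.1 c.2 -> reads_before c (x, y) ->
  absl (T c.1 c.2) <> i.

Lemma first_box_leftmost c : Tset la mu T i c -> y <= c.2.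
Proof.
(* A box (x', y') of T^(i) with y' < y lies in a higher row x' < x, and then
   (x', y - 1), (x', y), (x' + 1, y) would all lie in T^(i). *)
case: c => x' y'; rewrite /Tset /boxpred /= => /andP[x'y'_skew /eqP x'y'_i].
rewrite leqNgt; apply/negP => y'y.
have x'x : x' < x.
  rewrite ltnNge; apply/negP => xx'; apply: (@xy_first (x', y') x'y'_skew _ x'y'_i).
  by rewrite /reads_before /=; apply/orP; lia.
have x'y := inSkew_row_between la_DP (j := y) x'y'_skew xy_skew x'x ltac:(lia).
have x'y1 := inSkew_row_between la_DP (j := y - 1) x'y'_skew xy_skew x'x ltac:(lia).
have x'1y := inSkew_col_between la_DP mu_DP (z := x'.+1) x'y xy_skew ltac:(lia).
case: T_tab => _ [row [col _]].
have := row _ _ _ x'y'_skew x'y1 ltac:(lia); have := row _ _ _ x'y1 x'y ltac:(lia).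
have := col _ _ _ x'y x'1y ltac:(lia); have := col _ _ _ x'1y xy_skew ltac:(lia).
move: x'y'_i xy_i => /eqP + /eqP; rewrite !absl_lcode => ? ? ? ? ? ?.
have y1 : (y - 1).+1 = y by lia.
apply: (@no_absl_triangle i x' (y - 1)); rewrite ?y1 //;
  by apply/eqP; rewrite absl_lcode; lia.
Qed.

Lemma first_box_unm : fitting la mu T i -> T x y = unm i.
Proof.
have xy_Ti : Tset la mu T i (x, y) by rewrite /Tset /boxpred /= xy_skew xy_i eqxx.
move=> /(_ (x, y)); apply.
  exists (x, y); split; first exact: xy_Ti.
  by split; [exact: first_box_leftmost | split; last exists [::]; rewrite //= eqxx].
split=> //; split; apply/negP; rewrite /Tset /boxpred /= => /andP[skew /eqP abs_i].
  by apply: (@xy_first (x + 1, y)) abs_i; rewrite // /reads_before /= addn1 ltnSn.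
apply: (@xy_first (x, y - 1)) abs_i; rewrite // /reads_before /= eqxx /=.
by move: xy_skew; rewrite /inSkew /inD; lia.
Qed.

End FirstBox.

Lemma readword_first_unm i p :
  (0 < content la mu T i -> fitting la mu T i) -> p < size (readword la mu T) ->
  absl (nth (unm 0) (readword la mu T) p) = i ->
  (forall q, q < p -> absl (nth (unm 0) (readword la mu T) q) <> i) ->
  nth (unm 0) (readword la mu T) p = unm i.
Proof.
move=> fit lt_p abs_p before.
have fit_i : fitting la mu T i.
  apply: fit; rewrite /content -has_count; apply/hasP.
  by exists (nth (unm 0) (readword la mu T) p); [exact: mem_nth | rewrite abs_p].
move: lt_p abs_p before; rewrite size_readword => lt_p; rewrite nth_readword //.
case E: (nth (0, 0) (boxes la mu) p) => [x y] /= abs_p before.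
have xy_skew : inSkew la mu x y by rewrite -(mem_boxes la mu (x, y)) -E mem_nth.
apply: (first_box_unm xy_skew abs_p) fit_i => c c_skew c_before.
have : c \in take p (boxes la mu).
  apply: (mem_take_pairwise (x0 := (0, 0)) reads_before_irr reads_before_trans
           (pairwise_boxes la mu) lt_p); first by rewrite mem_boxes.
  by rewrite E.
case/(nthP (0, 0)) => q; rewrite size_take lt_p => q_lt; rewrite nth_take // => <-.
by have := before q q_lt; rewrite nth_readword //; apply: ltn_trans lt_p.
Qed.

Lemma unm_column_inj (P : pred (nat * nat)) i :
  (forall c, P c -> T c.1 c.2 = unm i) ->
  {in [seq c <- boxes la mu | P c] &, injective snd}.
Proof.
move=> P_unm [c1 c2] [d1 d2]; rewrite !mem_filter !mem_boxes /=.
move=> /andP[/P_unm c_unm c_skew] /andP[/P_unm d_unm d_skew] /= eq2; subst d2.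
case: (eqVneq c1 d1) => [-> // | /eqP c1d1].
case: T_tab => _ [_ [_ [colU _]]].
by have := colU _ _ _ c_skew d_skew c1d1; rewrite c_unm d_unm => /(_ erefl).
Qed.

(* Here k = a.+1, and the hypotheses are conditions (3), (2) and (1). *)
Section AdjacentLetters.

Variable a : nat.
Hypothesis mrk_diag : forall x y, inSkew la mu x y -> T x y = mrk a.+1 ->
  inSkew la mu (x - 1) (y - 1) /\ T (x - 1) (y - 1) = mrk a.

Lemma unm_above_mrk x y : inSkew la mu x y -> T x y = mrk a.+1 ->
  exists z, [/\ z < x, inSkew la mu z y & T z y = unm a].
Proof.
elim/ltn_ind: x => x IH xy_skew xy_mrk.
have [diag_skew diag_mrk] := mrk_diag xy_skew xy_mrk.
have up_skew := inSkew_diag_up la_DP diag_skew xy_skew.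
have x_pos : 0 < x by move: xy_skew; rewrite /inSkew /inD; lia.
case: T_tab => _ [row [col [_ rowM]]].
have := row _ _ _ diag_skew up_skew (leq_subr 1 y).
have := col _ _ _ up_skew xy_skew (leq_subr 1 x).
rewrite diag_mrk xy_mrk !lcode_mrk => up_le up_ge.
have up_not_mrk : T (x - 1) y <> mrk a.
  move=> up_mrk; have y_pos : y - 1 <> y by move: diag_skew; rewrite /inSkew /inD; lia.
  by have := rowM _ _ _ diag_skew up_skew y_pos; rewrite diag_mrk up_mrk => /(_ erefl).
have [/lcode_eq_unm up_unm|/lcode_eq_mrk up_mrk] :
    lcode (T (x - 1) y) = a.*2.+1 \/ lcode (T (x - 1) y) = a.+1.*2.
  by case: (ltngtP (lcode (T (x - 1) y)) a.*2) => [?|?|/lcode_eq_mrk/up_not_mrk //]; lia.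
  by exists (x - 1); split => //; lia.
have [z [zx z_skew z_unm]] := IH (x - 1) ltac:(lia) up_skew up_mrk.
by exists z; split => //; lia.
Qed.

Hypothesis unm_above_unm : forall x y, inSkew la mu x y -> T x y = unm a.+1 ->
  exists z, [/\ z < x, inSkew la mu z y & T z y = unm a].

Lemma count_unm_lt_in (R : pred (nat * nat)) z0 y0 :
  (forall c z, R c -> z < c.1 -> R (z, c.2)) ->
  inSkew la mu z0 y0 -> T z0 y0 = unm a -> R (z0, y0) ->
  (forall z, inSkew la mu z y0 -> T z y0 = unm a.+1 -> ~~ R (z, y0)) ->
  count (fun c => (T c.1 c.2 == unm a.+1) && R c) (boxes la mu) <
  count (fun c => (T c.1 c.2 == unm a) && R c) (boxes la mu).
Proof.
(* Inject the columns of the unmarked a.+1 in R, plus the spare column y0, into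
   the columns of the unmarked a in R. *)
move=> R_up z0_skew z0_unm z0_R y0_free.
apply: (@leq_count_inj _ _ _ _ _ snd snd [:: y0] (uniq_boxes la mu) erefl).
- by apply: (@unm_column_inj _ a.+1) => c /andP[/eqP].
- move=> _ /[1!inE] /eqP ->; apply/mapP => -[[c1 c2]].
  rewrite mem_filter mem_boxes /= => /andP[/andP[/eqP c_unm c_R] c_skew] ey; subst c2.
  by move: c_R; apply/negP/y0_free.
move=> _ /[1!inE] /orP[/eqP -> | /mapP[[c1 c2] + ->]].
  by apply/mapP; exists (z0, y0); rewrite // mem_filter mem_boxes /= z0_unm eqxx z0_R.
rewrite mem_filter mem_boxes /= => /andP[/andP[/eqP c_unm c_R] c_skew].
have [z [zc z_skew z_unm]] := unm_above_unm c_skew c_unm.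
apply/mapP; exists (z, c2); rewrite // mem_filter mem_boxes /= z_unm eqxx z_skew.
by rewrite (R_up (c1, c2)).
Qed.

Lemma count_unm_after_lt x y : inSkew la mu x y -> T x y \in [:: mrk a.+1; unm a.+1] ->
  count (fun c => (T c.1 c.2 == unm a.+1) && reads_before (x, y) c) (boxes la mu) <
  count (fun c => (T c.1 c.2 == unm a) && reads_before (x, y) c) (boxes la mu).
Proof.
move=> xy_skew; rewrite !inE => xy_k.
have [z [zx z_skew z_unm]] : exists z, [/\ z < x, inSkew la mu z y & T z y = unm a].
  by case/orP: xy_k => /eqP; [exact: unm_above_mrk xy_skew | exact: unm_above_unm xy_skew].
apply: (count_unm_lt_in _ z_skew z_unm); rewrite /reads_before /=.
- move=> [c1 c2] z' /= c_after z'c; apply/orP; left.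
  by case/orP: c_after => [|/andP[/eqP ? _]]; lia.
- by rewrite zx.
move=> z' z'_skew z'_unm; rewrite ltnn andbF orbF; apply/negP => z'x.
case: T_tab => _ [_ [col [colU _]]].
have := col _ _ _ z'_skew xy_skew (ltnW z'x); rewrite z'_unm.
case/orP: xy_k => /eqP xy_k; first by rewrite xy_k lcode_unm lcode_mrk; lia.
have z'_ne_x : z' <> x by lia.
by have := colU _ _ _ z'_skew xy_skew z'_ne_x; rewrite z'_unm xy_k => /(_ erefl).
Qed.

Hypothesis unm_bottom : exists x y, [/\ inSkew la mu x y, T x y = unm a &
  forall z, x < z -> inSkew la mu z y -> T z y <> unm a.+1].

Lemma count_unm_lt :
  count (fun c => T c.1 c.2 == unm a.+1) (boxes la mu) <
  count (fun c => T c.1 c.2 == unm a) (boxes la mu).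
Proof.
have [x [y [xy_skew xy_unm below_free]]] := unm_bottom.
have := @count_unm_lt_in predT _ _ (fun _ _ _ _ => erefl) xy_skew xy_unm erefl.
rewrite !(eq_count (fun c => andbT _)); apply=> z z_skew z_unm.
case: (ltngtP z x) => [zx|/below_free/(_ z_skew)//|zx]; last first.
  by move: xy_unm; rewrite -zx z_unm => -[] ?; lia.
case: T_tab => _ [_ [col _]].
by have := col _ _ _ z_skew xy_skew (ltnW zx); rewrite z_unm xy_unm !lcode_unm; lia.
Qed.

Lemma count_mrk_before_le x y : inSkew la mu x y -> T x y \in [:: unm a; mrk a.+1] ->
  count (fun c => (T c.1 c.2 == mrk a.+1) && reads_before c (x, y)) (boxes la mu) <=
  count (fun c => (T c.1 c.2 == mrk a) && reads_before c (x, y)) (boxes la mu).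
Proof.
move=> xy_skew xy_in.
have xy_code : a.*2.+1 <= lcode (T x y) <= a.+1.*2.
  by move: xy_in; rewrite !inE => /orP[] /eqP ->; rewrite ?lcode_unm ?lcode_mrk; lia.
pose diag (c : nat * nat) := (c.1 - 1, c.2 - 1).
apply: (@leq_count_inj _ _ _ _ _ diag id [::] (uniq_boxes la mu) erefl) => //.
  move=> [c1 c2] [d1 d2]; rewrite !mem_filter !mem_boxes /inSkew /inD /=.
  by move=> /andP[_ c_skew] /andP[_ d_skew] [? ?]; congr pair; lia.
move=> _ /mapP[[c1 c2] + ->]; rewrite map_id mem_filter mem_boxes /=.
move=> /andP[/andP[/eqP c_mrk c_before] c_skew].
have [diag_skew diag_mrk] := mrk_diag c_skew c_mrk.
rewrite mem_filter mem_boxes /= diag_mrk eqxx diag_skew andbT /=.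
case: T_tab => _ [row [_ [_ rowM]]].
move: c_before; rewrite /reads_before /= => /orP[xc1|/andP[/eqP xc1 c2y]].
  have [-> // | xc1'] : x < c1 - 1 \/ c1 - 1 = x by lia.
  rewrite xc1' eqxx ltnn ltnNge /=; apply/negP => y_le.
  rewrite xc1' in diag_skew diag_mrk.
  by have := row _ _ _ xy_skew diag_skew y_le; rewrite diag_mrk lcode_mrk; lia.
subst c1; have := row _ _ _ c_skew xy_skew (ltnW c2y); rewrite c_mrk lcode_mrk => c_le.
have /lcode_eq_mrk xy_mrk : lcode (T x y) = a.+1.*2 by lia.
have c2_ne_y : c2 <> y by lia.
by have := rowM _ _ _ c_skew xy_skew c2_ne_y; rewrite c_mrk xy_mrk => /(_ erefl).
Qed.

Lemma readword_unm_after p : p < size (readword la mu T) ->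
  nth (unm 0) (readword la mu T) p \in [:: mrk a.+1; unm a.+1] ->
  count (pred1 (unm a.+1)) (drop p.+1 (readword la mu T)) !=
  count (pred1 (unm a)) (drop p.+1 (readword la mu T)).
Proof.
rewrite size_readword => lt_p; rewrite nth_readword // !count_drop_readword //.
case: (nth (0, 0) (boxes la mu) p) (mem_nth (0, 0) lt_p) => x y.
by rewrite mem_boxes => xy_skew /(count_unm_after_lt xy_skew) /ltn_eqF ->.
Qed.

Lemma readword_mrk_before p : p < size (readword la mu T) ->
  nth (unm 0) (readword la mu T) p \in [:: unm a; mrk a.+1] ->
  count (pred1 (unm a.+1)) (readword la mu T) +
    count (pred1 (mrk a.+1)) (take p (readword la mu T)) !=
  count (pred1 (unm a)) (readword la mu T) +
    count (pred1 (mrk a)) (take p (readword la mu T)).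
Proof.
rewrite size_readword => lt_p; rewrite nth_readword // !count_take_readword //.
rewrite /readword !count_map.
case: (nth (0, 0) (boxes la mu) p) (mem_nth (0, 0) lt_p) => x y.
rewrite mem_boxes => xy_skew /(count_mrk_before_le xy_skew) mrk_le.
have := leq_add count_unm_lt mrk_le; rewrite addSn => lt_counts.
by apply/negbT/ltn_eqF; exact: lt_counts.
Qed.

End AdjacentLetters.

End TableauFacts.

Theorem corollary2p22 (la mu : seq nat) (k : nat) (T : nat -> nat -> letter) :
  is_DP la -> is_DP mu -> (forall i j, inD mu i j -> inD la i j) ->
  1 < k -> is_tableau la mu T ->
  ((content la mu T k = 0 /\ content la mu T k.-1 = 0) \/
   [/\ (* (1) *)
       (exists x y, [/\ inSkew la mu x y, T x y = unm k.-1 &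
          forall z, x < z -> inSkew la mu z y -> T z y <> unm k]),
       (* (2) *)
       (forall x y, inSkew la mu x y -> T x y = unm k ->
          exists z, [/\ z < x, inSkew la mu z y & T z y = unm k.-1]),
       (* (3) *)
       (forall x y, inSkew la mu x y -> T x y = mrk k ->
          inSkew la mu (x - 1) (y - 1) /\ T (x - 1) (y - 1) = mrk k.-1),
       (* (4) *)
       fitting la mu T k.-1 &
       (* (5) *)
       (0 < content la mu T k -> fitting la mu T k)]) ->
  tab_amenable la mu T k.
Proof.
move=> la_DP mu_DP _ k_gt1 T_tab.
have [a ->] : exists a, k = a.+1 by exists k.-1; lia.
case=> [[no_k no_k1] | [unm_bottom unm_above_unm mrk_diag fit_k1 fit_k]].
  exact: amenable_absent.
apply: amenable_of_counts.
- exact: readword_unm_after.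
- exact: readword_mrk_before.
move=> i; rewrite !inE => /orP[] /eqP -> p.
  exact: readword_first_unm la_DP mu_DP T_tab _ _ fit_k.
exact: readword_first_unm la_DP mu_DP T_tab _ _ (fun _ => fit_k1).
Qed.
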